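(* Let $\psi\in\mathrm{SO}^0(2,1)$. Then there exists $K$ such that, for any $\epsilon>0$, an element $g\in\mathrm{SO}^0(2,1)$ is $\epsilon/K$-hyperbolic whenever $\psi g\psi^{-1}$ is $\epsilon$-hyperbolic.
   Context: $\mathbb{R}^{2,1}$ is $\mathbb{R}^3$ with $\mathbb{B}(u,v)=u_1v_1+u_2v_2-u_3v_3$; $\mathrm{SO}^0(2,1)$ is the identity component of its linear isometry group; $\rho$ is Euclidean distance. $S^1=\{(\cos\phi,\sin\phi,1)\}$. $g\in\mathrm{SO}^0(2,1)$ is hyperbolic if it has real distinct eigenvalues, necessarily $\lambda<1<\lambda^{-1}$; $x^-(g)$, $x^+(g)$ are the eigenvectors on $S^1$ for $\lambda$, $\lambda^{-1}$. $g$ is $\epsilon$-hyperbolic if it is hyperbolic and $\rho(x^+(g),x^-(g))\ge\epsilon$. *)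

From HB Require Import structures.
From mathcomp Require Import all_boot all_order all_algebra.
From mathcomp Require Import reals.
Set Implicit Arguments. Unset Strict Implicit. Unset Printing Implicit Defensive.
Import Order.TTheory GRing.Theory Num.Theory.
Local Open Scope ring_scope.

(* coordinate indices 1,2,3 of R^3 (0-based ordinals) *)
Definition i0 : 'I_3 := @Ordinal 3 0 isT.
Definition i1 : 'I_3 := @Ordinal 3 1 isT.
Definition i2 : 'I_3 := @Ordinal 3 2 isT.

Definition Jmx (R : realType) : 'M[R]_3 :=
  \matrix_(i < 3, j < 3) (if i == j then (if i == i2 then -1 else 1) else 0).

Definition Bform (R : realType) (u v : 'cV[R]_3) : R :=
  u i0 0 * v i0 0 + u i1 0 * v i1 0 - u i2 0 * v i2 0.

(* SO^0(2,1): linear isometries of B (g^T J g = J) with det 1, in the identity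
   component, i.e. preserving the future light cone (g_33 > 0). *)
Definition SO021 (R : realType) (g : 'M[R]_3) : Prop :=
  g^T *m Jmx R *m g = Jmx R /\ \det g = 1 /\ 0 < g i2 i2.

Definition onS1 (R : realType) (x : 'cV[R]_3) : Prop :=
  x i0 0 ^+ 2 + x i1 0 ^+ 2 = 1 /\ x i2 0 = 1.

Definition rho (R : realType) (x y : 'cV[R]_3) : R :=
  Num.sqrt (\sum_(i < 3) (x i 0 - y i 0) ^+ 2).

Definition hyperbolic (R : realType) (g : 'M[R]_3) : Prop :=
  exists a b c : R, [/\ a != b, b != c, a != c &
    [/\ eigenvalue g a, eigenvalue g b & eigenvalue g c]].

Definition eps_hyperbolic (R : realType) (eps : R) (g : 'M[R]_3) : Prop :=
  hyperbolic g /\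
  exists (lam : R) (xm xp : 'cV[R]_3),
    [/\ 0 < lam, lam < 1, onS1 xm & onS1 xp] /\
    [/\ g *m xm = lam *: xm, g *m xp = lam^-1 *: xp & eps <= rho xp xm].

From HB Require Import structures.
From mathcomp Require Import all_boot all_order all_algebra.
From mathcomp Require Import reals.
From mathcomp Require Import ring lra.
Import Order.TTheory GRing.Theory Num.Theory.
Local Open Scope ring_scope.

(* Write [x = psi *m (s *: z)] with [x, z] on S^1. Since [psi] preserves [B] and
   [rho^2 = -2 B] on S^1, [rho(x, x')^2 = s s' rho(z, z')^2]. The scale [s] is the
   third coordinate of the null vector [invmx psi *m x], i.e. [-B(psi e3, x)], and
   it lies in [(0, 2 psi33]] because [psi e3] is a future unit timelike vector;
   hence [K = 2 psi33] works. *)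

Section Minkowski.

Context {R : realType}.
Implicit Types (u v x y c : 'cV[R]_3) (g psi : 'M[R]_3).

Lemma sum_ord3 (F : 'I_3 -> R) : \sum_i F i = F i0 + F i1 + F i2.
Proof.
by rewrite !big_ord_recl big_ord0 addr0 addrA; congr (F _ + F _ + F _); apply: val_inj.
Qed.

Lemma Bform_mx u v : Bform u v = (u^T *m Jmx R *m v) 0 0.
Proof. by rewrite /Bform mxE sum_ord3 !mxE !sum_ord3 !mxE /=; ring. Qed.

Lemma BformZ (a b : R) u v : Bform (a *: u) (b *: v) = a * b * Bform u v.
Proof. by rewrite /Bform !mxE; ring. Qed.

Lemma Bform_S1 {x} : onS1 x -> Bform x x = 0.
Proof. by case=> x01 x2; rewrite /Bform x2; nra. Qed.

Lemma rho_S1_sqr {x y} : onS1 x -> onS1 y -> rho x y ^+ 2 = -2 * Bform x y.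
Proof.
move=> [x01 x2] [y01 y2]; rewrite /rho sqr_sqrtr ?sumr_ge0 // => [|i _].
  by rewrite sum_ord3 /Bform x2 y2; nra.
exact: sqr_ge0.
Qed.

Lemma S1_timelike_bound c x :
  Bform c c = -1 -> 0 < c i2 0 -> onS1 x -> 0 < - Bform c x <= 2 * c i2 0.
Proof.
rewrite /Bform => cc c2 [x01 x2]; rewrite x2 mulr1.
move: cc c2 x01; set c0 := c i0 0; set c1 := c i1 0; set c3 := c i2 0.
set x0 := x i0 0; set x1 := x i1 0 => cc c2 x01.
have cross := sqr_ge0 (c0 * x1 - c1 * x0).
(* Cauchy-Schwarz: [(c0 x0 + c1 x1)^2 <= c0^2 + c1^2 = c3^2 - 1]. *)
have CS : (c0 * x0 + c1 * x1) ^+ 2 < c3 ^+ 2 by nra.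
by apply/andP; split; nra.
Qed.

Definition S1_proj x : 'cV[R]_3 := (x i2 0)^-1 *: x.

Lemma onS1_proj x : Bform x x = 0 -> x i2 0 != 0 -> onS1 (S1_proj x).
Proof.
move=> xx x2; have := BformZ (x i2 0)^-1 (x i2 0)^-1 x x.
have z2 : S1_proj x i2 0 = 1 by rewrite mxE mulVf.
by rewrite xx mulr0 /Bform -/(S1_proj x) z2 => ?; split=> //; lra.
Qed.

Lemma S1_projK x : x i2 0 != 0 -> x i2 0 *: S1_proj x = x.
Proof. by move=> x2; rewrite scalerA mulfV // scale1r. Qed.

Lemma eigenvector_S1_proj g x (a : R) :
  g *m x = a *: x -> g *m S1_proj x = a *: S1_proj x.
Proof. by move=> gx; rewrite -scalemxAr gx !scalerA mulrC. Qed.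

Lemma eigenvector_conj {psi} g x (a : R) : psi \in unitmx ->
  (psi *m g *m invmx psi) *m x = a *: x ->
  g *m (invmx psi *m x) = a *: (invmx psi *m x).
Proof. by move=> psiU gx; rewrite scalemxAr -gx !mulmxA mulVmx // mul1mx. Qed.

Lemma hyperbolic_conj {psi} g :
  psi \in unitmx -> hyperbolic (psi *m g *m invmx psi) -> hyperbolic g.
Proof.
move=> psiU; have eig a : eigenvalue (psi *m g *m invmx psi) a -> eigenvalue g a.
  rewrite -(pinvmxE psiU); apply: eigenvalue_conjmx; last by rewrite row_free_unit.
  by apply: stablemx_full; rewrite row_full_unit.
case=> a [b [c [ab bc ac [ea eb ec]]]].
by exists a, b, c; split=> //; split; apply: eig.
Qed.

Section SO021_action.

Context {psi : 'M[R]_3} (psiSO : SO021 psi).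

Lemma SO021_unitmx : psi \in unitmx.
Proof. by case: psiSO => _ [det1 _]; rewrite unitmxE det1 unitr1. Qed.

Lemma Bform_SO021 u v : Bform (psi *m u) (psi *m v) = Bform u v.
Proof.
by case: psiSO => isom _; rewrite !Bform_mx trmx_mul -[in RHS]isom !mulmxA.
Qed.

Lemma Bform_invmx u v : Bform u (invmx psi *m v) = Bform (psi *m u) v.
Proof. by rewrite -Bform_SO021 mulKVmx ?SO021_unitmx. Qed.

Lemma invmx_SO021_S1_height {x} :
  onS1 x -> 0 < (invmx psi *m x) i2 0 <= 2 * psi i2 i2.
Proof.
move=> xS1; have e3 : (invmx psi *m x) i2 0 = - Bform (col i2 psi) x.
  by rewrite colE -Bform_invmx /Bform !mxE /=; ring.
have cc : Bform (col i2 psi) (col i2 psi) = -1.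
  by rewrite colE Bform_SO021 /Bform !mxE /=; ring.
have [_ [_ psi22]] := psiSO.
by rewrite e3; have := S1_timelike_bound _ x cc; rewrite !mxE; apply.
Qed.

Lemma onS1_invmx {x} : onS1 x -> onS1 (S1_proj (invmx psi *m x)).
Proof.
move=> xS1; have /andP[x2 _] := invmx_SO021_S1_height xS1.
apply: onS1_proj; last exact: lt0r_neq0.
by rewrite Bform_invmx mulKVmx ?SO021_unitmx // Bform_S1.
Qed.

Lemma rho_invmx_S1_le {x y} : onS1 x -> onS1 y ->
  rho x y <= 2 * psi i2 i2 *
             rho (S1_proj (invmx psi *m x)) (S1_proj (invmx psi *m y)).
Proof.
move=> xS1 yS1; set zx := S1_proj _; set zy := S1_proj _.
have zxS1 : onS1 zx := onS1_invmx xS1.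
have zyS1 : onS1 zy := onS1_invmx yS1.
have /andP[sx0 sxK] := invmx_SO021_S1_height xS1.
have /andP[sy0 syK] := invmx_SO021_S1_height yS1.
have Bxy : Bform x y = (invmx psi *m x) i2 0 * (invmx psi *m y) i2 0 * Bform zx zy.
  by rewrite -BformZ !S1_projK ?lt0r_neq0 // Bform_invmx mulKVmx ?SO021_unitmx.
have := sqr_ge0 (rho zx zy); rewrite rho_S1_sqr // => Bz.
rewrite -ler_sqr ?nnegrE ?mulr_ge0 ?sqrtr_ge0 //; last lra.
rewrite exprMn !rho_S1_sqr // Bxy.
have : (invmx psi *m x) i2 0 * (invmx psi *m y) i2 0 <= (2 * psi i2 i2) ^+ 2.
  by rewrite expr2; apply: ler_pM; lra.
by nra.
Qed.

End SO021_action.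

End Minkowski.

Theorem mainTheorem16 (R : realType) (psi : 'M[R]_3) :
  SO021 psi ->
  exists K : R, 0 < K /\
    forall (eps : R), 0 < eps ->
    forall g : 'M[R]_3, SO021 g ->
      eps_hyperbolic eps (psi *m g *m invmx psi) ->
      eps_hyperbolic (eps / K) g.
Proof.
move=> psiSO; have [_ [_ psi22]] := psiSO; have psiU := SO021_unitmx psiSO.
exists (2 * psi i2 i2); split=> [|eps eps0 g _]; first lra.
move=> [hyp [lam [xm [xp [[lam0 lam1 xmS1 xpS1] [gxm gxp dist]]]]]].
split; first exact: hyperbolic_conj hyp.
exists lam, (S1_proj (invmx psi *m xm)), (S1_proj (invmx psi *m xp)).
split; first by split=> //; exact: onS1_invmx.
split; [exact/eigenvector_S1_proj/eigenvector_conj..|].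
rewrite ler_pdivrMr ?mulr_gt0 // mulrC.
exact: le_trans dist (rho_invmx_S1_le psiSO xpS1 xmS1).
Qed.
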